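(* Let $c \in (0,1/2]$, $t_1 \in [0,1-2c]$, $t_2 \in [t_1+c,1-c]$, and let $p,q \in (0,1)$ with $p \neq q$. Let $F$, $\mu_p$, $\mu_q$, $\Lambda_{p,q}$ and $\gamma_r$ be as described in the context. Then for every $r \in \Lambda_{p,q}$, \[ \int_{F \times F} |x-y| \, d\gamma_r(x,y) \;=\; \frac{t_2-t_1}{1-c}\, \frac{c(p-q)^2+(1-c)(p+q-2r)}{(1-c)+c(p+q-2r)}. \]
   Context: Let $S_1(x)=cx+t_1$ and $S_2(x)=cx+t_2$ on $[0,1]$. Let $F\subseteq[0,1]$ be the unique nonempty compact set with $F=S_1(F)\cup S_2(F)$. For $p\in(0,1)$, $\mu_p$ is the unique Borel probability measure with $\mu_p = p\,\mu_p\circ S_1^{-1} + (1-p)\,\mu_p\circ S_2^{-1}$ (supported on $F$). On $[0,1]^2$ define $S_{i,j}(x,y)=(S_i(x),S_j(y))$ for $i,j\in\{1,2\}$. Let $\Lambda_{p,q}$ be the open interval $\max\{0,p+q-1\}<r<\min\{p,q\}$. For $r\in\Lambda_{p,q}$, $\gamma_r$ is the unique Borel probability measure on $[0,1]^2$ satisfying $\gamma_r = r\,\gamma_r\circ S_{1,1}^{-1} + (p-r)\,\gamma_r\circ S_{1,2}^{-1} + (q-r)\,\gamma_r\circ S_{2,1}^{-1} + (1-p-q+r)\,\gamma_r\circ S_{2,2}^{-1}$; it is supported on $F\times F$ and is a coupling of $\mu_p$ and $\mu_q$ (its first marginal is $\mu_p$, its second is $\mu_q$). *)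

From HB Require Import structures.
From mathcomp Require Import all_boot all_order all_algebra.
From mathcomp Require Import all_classical all_reals all_analysis.
Set Implicit Arguments. Unset Strict Implicit. Unset Printing Implicit Defensive.
Import Order.TTheory GRing.Theory Num.Theory.
Import numFieldNormedType.Exports.
Local Open Scope classical_set_scope.
Local Open Scope ring_scope.

Definition simil {R : realType} (c t : R) : R -> R := fun x => c * x + t.

Definition simil2 {R : realType} (c ti tj : R) : R * R -> R * R :=
  fun z => (simil c ti z.1, simil c tj z.2).

Definition coupling_selfsim {R : realType}
  (gamma : set (R * R) -> \bar R) (c t1 t2 p q r : R) : Prop :=
  forall A : set (R * R), measurable A ->
    gamma A =
      (r%:E * gamma (simil2 c t1 t1 @^-1` A)
     + (p - r)%:E * gamma (simil2 c t1 t2 @^-1` A)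
     + (q - r)%:E * gamma (simil2 c t2 t1 @^-1` A)
     + (1 - p - q + r)%:E * gamma (simil2 c t2 t2 @^-1` A))%E.

From HB Require Import structures.
From mathcomp Require Import all_boot all_order all_algebra.
From mathcomp Require Import all_classical all_reals all_analysis.
From mathcomp Require Import ring lra measurable_realfun.
Import Order.TTheory GRing.Theory Num.Theory.
Import numFieldNormedType.Exports.
Local Open Scope classical_set_scope.
Local Open Scope ring_scope.

(* gamma is carried by F x F: by self-similarity, the gamma-mass of the
   e-neighbourhood of F x F does not decrease when e is doubled (as c <= 1/2),
   and these neighbourhoods exhaust the plane, so all of them, hence F x F
   itself, have full mass.  Integrating x, y and |x - y| against the
   self-similarity relation then gives linear equations: each mean M of a
   marginal satisfies M = c M + (weighted translations), and since
   t1 + c <= t2 separates the two first-level pieces of F, |x - y| is affine on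
   the off-diagonal cells S12, S21 and scales by c on the diagonal ones. *)

Section selfsimilar_measure.
Context {d} {T : measurableType d} {R : realType}.
Context {mu : {measure set T -> \bar R}} {N : nat} {w : nat -> R} {f : nat -> T -> T}.
Hypotheses (w_ge0 : forall k, 0 <= w k) (mf : forall k, measurable_fun setT (f k)).
Hypothesis mu_selfsim : forall A, measurable A ->
  mu A = (\sum_(k < N) (w k)%:E * mu (f k @^-1` A))%E.

Lemma selfsim_le (A B : set T) : measurable A -> measurable B ->
  \sum_(k < N) w k = 1 -> (forall k, (k < N)%N -> B `<=` f k @^-1` A) ->
  (mu B <= mu A)%E.
Proof.
move=> mA mB w1 BA; rewrite (mu_selfsim _ mA) -[mu B]mul1e -w1 -sumEFin.
rewrite ge0_sume_distrl => [|k _]; last by rewrite lee_fin.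
apply: lee_sum => k _; rewrite lee_wpmul2l ?lee_fin //.
apply: le_measure; rewrite ?inE //; last exact: BA.
by rewrite -[X in measurable X]setTI; exact: mf.
Qed.

(* The library's pushforward measure, named through its instance because the
   measurability proof it depends on cannot be inferred. *)
Let image_measure k :=
  measure_function_pushforward__canonical__measure_function_Measure mu (mf k).

Lemma ge0_integral_selfsim (g : T -> \bar R) :
  measurable_fun setT g -> (forall x, 0 <= g x)%E ->
  (\int[mu]_x g x = \sum_(k < N) (w k)%:E * \int[mu]_x g (f k x))%E.
Proof.
move=> mg g0.
pose nu := msum (fun k => mscale (NngNum (w_ge0 k)) (image_measure k)) N.
rewrite (eq_measure_integral nu) => [|A mA _]; last first.
  by rewrite (mu_selfsim _ mA) /nu /msum; apply: eq_bigr.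
rewrite ge0_integral_measure_sum //; apply: eq_bigr => k _.
by rewrite ge0_integral_mscale //= ge0_integral_pushforward // preimage_setT.
Qed.

End selfsimilar_measure.

Lemma EFin_Rintegral d (T : measurableType d) (R : realType)
    (mu : {measure set T -> \bar R}) (D : set T) (f : T -> R) :
  measurable D -> mu.-integrable D (EFin \o f) ->
  (\int[mu]_(x in D) f x)%:E = (\int[mu]_(x in D) (f x)%:E)%E.
Proof. by move=> mD intf; rewrite fineK // integrable_fin_num. Qed.

Section thickening.
Context {R : realType} (F : set R).

Definition thickening (e : R) : set R := \bigcup_(y in F) ball y e.

Lemma thickening_measurable e : measurable (thickening e).
Proof. by apply: open_measurable; apply: bigcup_open => y _; exact: ball_open. Qed.

Lemma le_thickening e e' : e <= e' -> thickening e `<=` thickening e'.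
Proof. by move=> ee' x [y Fy yx]; exists y => //; exact: lt_le_trans ee'. Qed.

Lemma sub_thickening e : 0 < e -> F `<=` thickening e.
Proof. by move=> e0 x Fx; exists x; rewrite // /ball /= subrr normr0. Qed.

Lemma bigcap_thickening : closed F -> \bigcap_n thickening n.+1%:R^-1 = F.
Proof.
move=> clF; apply/seteqP; split => [x Fe|x Fx n _]; last exact: sub_thickening.
apply: contrapT => nFx.
have /nbhs_ballP[e /= e0 eF] : nbhs x (~` F) by apply: (closed_openC clF); exact: nFx.
have [y Fy] := Fe (Num.truncn e^-1) I.
rewrite /ball /= -normrN opprB => xy.
apply: (eF y) => //; rewrite /ball /=; apply: lt_trans xy _.
by rewrite invf_plt ?posrE // truncnS_gt.
Qed.

Lemma thickening_simil c a e x : 0 < c -> (forall y, F y -> F (simil c a y)) ->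
  thickening (e / c) x -> thickening e (simil c a x).
Proof.
move=> c0 Fsim [y Fy yx]; exists (simil c a y); first exact: Fsim.
rewrite /ball /simil /= in yx *.
rewrite opprD addrACA subrr addr0 -mulrBr normrM gtr0_norm //.
by rewrite -ltr_pdivlMl // mulrC.
Qed.

End thickening.
Arguments le_thickening {R F e e'}.

Section attractor.
Context {R : realType} {c t1 t2 : R} {F : set R}.
Hypotheses (c_gt0 : 0 < c) (c_lt1 : c < 1).
Hypotheses (t1_ge0 : 0 <= t1) (t1_le_t2 : t1 <= t2) (t2_le : t2 <= 1 - c).
Hypotheses (F_compact : compact F) (F_neq0 : F !=set0)
  (F_selfsim : F = simil c t1 @` F `|` simil c t2 @` F).

Lemma attractor_simil b y : F y -> F (simil c (if b then t2 else t1) y).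
Proof. by move=> Fy; rewrite F_selfsim; case: b; [right|left]; exists y. Qed.

Lemma attractor_simil_inv x : F x -> exists2 y, F y & x = simil c t1 y \/ x = simil c t2 y.
Proof. by rewrite {1}F_selfsim => -[] [y Fy <-]; exists y => //; [left|right]. Qed.

Lemma attractor_bounded x : F x -> 0 <= x <= 1.
Proof.
have [M [_ FM]] := compact_bounded F_compact.
have FM1 y : F y -> `|y| <= `|M| + 1.
  by move=> Fy; apply: (FM (`|M| + 1)) => //; rewrite ltr_pwDr // ler_norm.
have Fub : has_ubound F.
  by exists (`|M| + 1) => y /FM1; apply: le_trans; exact: ler_norm.
have Flb : has_lbound F.
  exists (- (`|M| + 1)) => y /FM1; rewrite lerNl; apply: le_trans.
  by rewrite -normrN ler_norm.
move=> Fx; apply/andP; split.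
- have : c * inf F + t1 <= inf F.
    apply: lb_le_inf => // y /attractor_simil_inv [z Fz [->|->]]; rewrite /simil.
      by rewrite lerD2r ler_pM2l //; exact: ge_inf.
    by apply: lerD => //; rewrite ler_pM2l //; exact: ge_inf.
  move=> le_inf; have : 0 <= (1 - c) * inf F.
    by rewrite mulrBl mul1r subr_ge0 (le_trans _ le_inf) // lerDl.
  rewrite pmulr_rge0 ?subr_gt0 // => inf_ge0.
  by apply: le_trans inf_ge0 _; exact: ge_inf.
- have : sup F <= c * sup F + t2.
    apply: ge_sup => // y /attractor_simil_inv [z Fz [->|->]]; rewrite /simil.
      by apply: lerD => //; rewrite ler_pM2l //; exact: ub_le_sup.
    by rewrite lerD2r ler_pM2l //; exact: ub_le_sup.
  move=> sup_le; have : (1 - c) * (sup F - 1) <= 0.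
    rewrite mulrBr mulr1 subr_le0 mulrBl mul1r lerBlDr (le_trans sup_le) //.
    by rewrite addrC lerD2r.
  rewrite pmulr_rle0 ?subr_gt0 // subr_le0 => sup_le1.
  by apply: le_trans sup_le1; exact: ub_le_sup.
Qed.

End attractor.

Section coupling_on_attractor.
Variables (R : realType) (c t1 t2 p q r : R) (F : set R).
Variable gamma : probability (R * R)%type R.
Hypotheses (c_gt0 : 0 < c) (c_le1_2 : c <= 1 / 2).
Hypotheses (t1_ge0 : 0 <= t1) (t1_sep : t1 + c <= t2) (t2_le : t2 <= 1 - c).
Hypotheses (F_compact : compact F) (F_neq0 : F !=set0)
  (F_selfsim : F = simil c t1 @` F `|` simil c t2 @` F).
Hypotheses (r_gt : Num.max 0 (p + q - 1) < r) (r_lt : r < Num.min p q).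
Hypothesis gamma_selfsim : coupling_selfsim gamma c t1 t2 p q r.

Let c_lt1 : c < 1. Proof. move: c_le1_2; lra. Qed.
Let t1_le_t2 : t1 <= t2. Proof. move: c_gt0 t1_sep; lra. Qed.
Let F_closed : closed F. Proof. exact: compact_closed. Qed.
Let K_measurable : measurable (F `*` F).
Proof. by apply: measurableX; exact: closed_measurable. Qed.

Local Notation K := (F `*` F).
Local Notation shift b := (if b then t2 else t1).

(* The cells S11, S12, S21, S22 are numbered 0, 1, 2, 3; for k > 3, cell k is
   S21 or S22 with weight 0, so no lemma needs the side condition k < 4. *)
Definition cell k : R * R -> R * R := simil2 c (shift (1 < k)%N) (shift (odd k)).
Definition cell_weight k : R := nth 0 [:: r; p - r; q - r; 1 - p - q + r] k.

Lemma cell_weight_gt0 k : (k < 4)%N -> 0 < cell_weight k.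
Proof.
move: r_gt r_lt; rewrite gt_max lt_min => /andP[r0 rpq] /andP[rp rq].
by rewrite /cell_weight; case: k => [|[|[|[|]]]] //= _; lra.
Qed.

Lemma cell_weight_ge0 k : 0 <= cell_weight k.
Proof.
by case: (ltnP k 4) => [/cell_weight_gt0/ltW|k4] //; rewrite /cell_weight nth_default.
Qed.

Lemma sum_cell_weight : \sum_(k < 4) cell_weight k = 1.
Proof. by rewrite !big_ord_recr big_ord0 /= /cell_weight /=; lra. Qed.

Lemma cell_measurable k : measurable_fun setT (cell k).
Proof.
have msimil a : measurable_fun setT (simil c a).
  by apply: continuous_measurable_fun => x; apply: continuousD;
    [apply: continuousM; [exact: cvg_cst|exact: cvg_id]|exact: cvg_cst].
apply: measurable_fun_pair.
- exact: measurableT_comp (msimil _) measurable_fst.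
- exact: measurableT_comp (msimil _) measurable_snd.
Qed.

Lemma cell_attractor k z : K z -> K (cell k z).
Proof. by case=> F1 F2; split; exact: attractor_simil. Qed.

Lemma gamma_cells A : measurable A ->
  gamma A = (\sum_(k < 4) (cell_weight k)%:E * gamma (cell k @^-1` A))%E.
Proof. by move=> mA; rewrite gamma_selfsim // !big_ord_recr big_ord0 /= add0e. Qed.

Local Notation U e := (thickening F e `*` thickening F e).

Lemma thickening2_measurable e : measurable (U e).
Proof. by apply: measurableX; exact: thickening_measurable. Qed.

Lemma le_thickening2 e e' : e <= e' -> U e `<=` U e'.
Proof. by move=> ee' z [z1 z2]; split; apply: (le_thickening ee'). Qed.
Arguments le_thickening2 [e e'].

Lemma gamma_thickening_le e e' : 0 < e -> e' <= e / c ->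
  (gamma (U e') <= gamma (U e))%E.
Proof.
move=> e0 e'e; apply: (selfsim_le cell_weight_ge0 cell_measurable gamma_cells _ _
  (thickening2_measurable _) (thickening2_measurable _) sum_cell_weight).
move=> k _ z /(le_thickening2 e'e) [z1 z2].
by split; apply: thickening_simil => // y Fy; exact: attractor_simil.
Qed.

Lemma gamma_thickening e : 0 < e -> gamma (U e) = 1%E.
Proof.
move=> e0; pose V n := U (e * 2 ^+ n).
have V_le n : (gamma (V n) <= gamma (U e))%E.
  elim: n => [|n IHn]; first by rewrite /V expr0 mulr1.
  apply: le_trans IHn; apply: gamma_thickening_le; first by rewrite mulr_gt0 ?exprn_gt0.
  rewrite exprS mulrCA ler_pdivlMr // mulrAC ler_piMl //.
    by rewrite mulr_ge0 ?exprn_ge0 ?ltW.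
  by move: c_le1_2; lra.
have V_cover : \bigcup_n V n = setT.
  apply/seteqP; split => // -[x y] _; have [y0 Fy0] := F_neq0.
  pose n := Num.truncn ((`|y0 - x| + `|y0 - y|) / e).
  have : `|y0 - x| + `|y0 - y| < e * 2 ^+ n.
    rewrite mulrC -ltr_pdivrMr //; apply: lt_le_trans (truncnS_gt _) _.
    by rewrite -natrX ler_nat ltn_expl.
  move=> lt_e; exists n => //; split; exists y0 => //; rewrite /ball /=;
    move: lt_e (normr_ge0 (y0 - x)) (normr_ge0 (y0 - y)); lra.
have V_incr : nondecreasing_seq V.
  move=> n m nm; apply/subsetPset/le_thickening2.
  by rewrite ler_pM2l // ler_eXn2l // ltr1n.
have mV : measurable (\bigcup_n V n) by rewrite V_cover.
have := nondecreasing_cvg_mu (mu := gamma) (fun n => thickening2_measurable _) mV V_incr.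
rewrite V_cover [X in _ --> X](_ : _ = 1%E) => [V_cvg|]; last exact: probability_setT.
apply/le_anti/andP; split; first exact: probability_le1 (thickening2_measurable e).
rewrite -(cvg_lim _ V_cvg) //; apply: lime_le; first exact: cvgP V_cvg.
exact: nearW.
Qed.

Lemma gamma_attractor : gamma K = 1%E.
Proof.
pose V n := U n.+1%:R^-1.
have V_cap : \bigcap_n V n = K.
  apply/seteqP; split => [z Vz|z [F1 F2] n _]; last first.
    by split; apply: sub_thickening.
  by split; rewrite -(bigcap_thickening F F_closed) => n _; case: (Vz n I).
have V_decr : nonincreasing_seq V.
  move=> n m nm; apply/subsetPset/le_thickening2.
  by rewrite lef_pV2 ?posrE // ler_nat.
have mV : measurable (\bigcap_n V n) by rewrite V_cap.
have V0_fin : (gamma (V 0%N) < +oo)%E by rewrite gamma_thickening // ltry.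
have := nonincreasing_cvg_mu V0_fin (fun n => thickening2_measurable _) mV V_decr.
rewrite V_cap (_ : _ \o V = cst 1%E) => [V_cvg|]; last first.
  by apply/funext => n; rewrite /= gamma_thickening.
by rewrite -(cvg_lim _ V_cvg) // lim_cst.
Qed.

Lemma attractor_integrable (h : R * R -> R) B : measurable_fun setT h ->
  (forall z, K z -> `|h z| <= B) -> gamma.-integrable K (EFin \o h).
Proof.
move=> mh hB; apply: measurable_bounded_integrable => //.
- by apply: le_lt_trans (probability_le1 _ K_measurable) _; rewrite ltry.
- exact: measurable_funS mh.
- exists B; split; first exact: num_real.
  by move=> M BM z Kz; apply: le_trans (hB z Kz) (ltW BM).
Qed.

Lemma ge0_integral_cells (h : R * R -> R) : measurable_fun setT h ->
  (forall z, K z -> 0 <= h z) ->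
  (\int[gamma]_(z in K) (h z)%:E =
   \sum_(k < 4) (cell_weight k)%:E * \int[gamma]_(z in K) (h (cell k z))%:E)%E.
Proof.
move=> mh h0; pose g := (EFin \o h) \_ K.
have mg : measurable_fun setT g.
  apply/(measurable_restrictT _ K_measurable)/measurable_EFinP.
  exact: measurable_funS mh.
have g0 z : (0 <= g z)%E.
  by rewrite /g /patch; case: ifP => // /set_mem Kz; rewrite lee_fin h0.
have gammaKC : gamma (~` K) = 0%E.
  by rewrite probability_setC // gamma_attractor subee.
rewrite integral_mkcond.
rewrite (ge0_integral_selfsim cell_weight_ge0 cell_measurable gamma_cells _ mg g0).
apply: eq_bigr => k _; congr (_ * _)%E.
have mgk : measurable_fun setT (g \o cell k) := measurableT_comp mg (cell_measurable k).
rewrite (ge0_negligible_integral (measurableC K_measurable) measurableT mgk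
  (fun z _ => g0 _) gammaKC).
rewrite setTD setCK; apply: eq_integral => z /set_mem Kz.
by rewrite /g /patch /= mem_set //; exact: cell_attractor.
Qed.

Lemma Rintegral_cells (h : R * R -> R) B : measurable_fun setT h ->
  (forall z, K z -> 0 <= h z <= B) ->
  \int[gamma]_(z in K) h z =
  \sum_(k < 4) cell_weight k * \int[gamma]_(z in K) h (cell k z).
Proof.
move=> mh hB; have hB' z : K z -> `|h z| <= B.
  by move/hB/andP=> [h0 hle]; rewrite ger0_norm.
apply: EFin_inj; rewrite EFin_Rintegral //; last exact: attractor_integrable hB'.
rewrite ge0_integral_cells //; last by move=> z /hB/andP[].
rewrite -sumEFin; apply: eq_bigr => k _; rewrite EFinM EFin_Rintegral //.
apply: (attractor_integrable _ B); first exact: measurableT_comp mh (cell_measurable k).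
by move=> z /(cell_attractor k)/hB'.
Qed.

Lemma attractor_unit z : K z -> [/\ 0 <= z.1, z.1 <= 1, 0 <= z.2 & z.2 <= 1].
Proof.
have F01 := attractor_bounded c_gt0 c_lt1 t1_ge0 t1_le_t2 t2_le F_compact F_neq0 F_selfsim.
by case=> /F01/andP[? ?] /F01/andP[? ?].
Qed.

Lemma affine_integrable (f : R * R -> R) a b k :
  f =1 (fun z => a * z.1 + b * z.2 + k) -> gamma.-integrable K (EFin \o f).
Proof.
move=> fE; apply: (attractor_integrable _ (`|a| + `|b| + `|k|)) =>
  [|z /attractor_unit[z1_ge0 z1_le1 z2_ge0 z2_le1]].
  rewrite (funext fE); apply: measurable_funD; last exact: measurable_cst.
  by apply: measurable_funD; apply: measurable_funM;
    [exact: measurable_cst|exact: measurable_fst|exact: measurable_cst|exact: measurable_snd].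
rewrite fE; apply: le_trans (ler_normD _ _) _; rewrite lerD2r.
apply: le_trans (ler_normD _ _) _; rewrite !normrM.
by apply: lerD; apply: ler_piMr; rewrite // ger0_norm.
Qed.

Local Notation mean1 := (\int[gamma]_(z in K) z.1).
Local Notation mean2 := (\int[gamma]_(z in K) z.2).

Lemma Rintegral_affine a b k :
  \int[gamma]_(z in K) (a * z.1 + b * z.2 + k) = a * mean1 + b * mean2 + k.
Proof.
have gammaK : fine (gamma K) = 1 by rewrite gamma_attractor.
rewrite RintegralD // ?RintegralD // ?RintegralZl // ?Rintegral_cst // ?gammaK ?mulr1 //.
- by apply: (affine_integrable _ 0 1 0) => z /=; lra.
- by apply: (affine_integrable _ 1 0 0) => z /=; lra.
- by apply: (affine_integrable _ a 0 0) => z /=; lra.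
- by apply: (affine_integrable _ 0 b 0) => z /=; lra.
- by apply: (affine_integrable _ a b 0) => z /=; lra.
- by apply: (affine_integrable _ 0 0 k) => z /=; lra.
Qed.

Lemma Rintegral_simil_fst a : \int[gamma]_(z in K) simil c a z.1 = c * mean1 + a.
Proof.
have := Rintegral_affine c 0 a; rewrite mul0r addr0 => <-.
by apply: eq_Rintegral => z _; rewrite /simil mul0r addr0.
Qed.

Lemma Rintegral_simil_snd a : \int[gamma]_(z in K) simil c a z.2 = c * mean2 + a.
Proof.
have := Rintegral_affine 0 c a; rewrite mul0r add0r => <-.
by apply: eq_Rintegral => z _; rewrite /simil mul0r add0r.
Qed.

Lemma mean1E : (1 - c) * mean1 = p * t1 + (1 - p) * t2.
Proof.
have fst01 z : K z -> 0 <= z.1 <= 1 by case/attractor_unit=> *; apply/andP.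
have := Rintegral_cells _ 1 measurable_fst fst01.
rewrite !big_ord_recr big_ord0 /= add0r /cell_weight /cell /simil2 /= !Rintegral_simil_fst.
lra.
Qed.

Lemma mean2E : (1 - c) * mean2 = q * t1 + (1 - q) * t2.
Proof.
have snd01 z : K z -> 0 <= z.2 <= 1 by case/attractor_unit=> *; apply/andP.
have := Rintegral_cells _ 1 measurable_snd snd01.
rewrite !big_ord_recr big_ord0 /= add0r /cell_weight /cell /simil2 /= !Rintegral_simil_snd.
lra.
Qed.

Local Notation dist_mean := (\int[gamma]_(z in K) `|z.1 - z.2|).

Lemma dist_simil a x y : `|simil c a x - simil c a y| = c * `|x - y|.
Proof. by rewrite /simil opprD addrACA subrr addr0 -mulrBr normrM gtr0_norm. Qed.

(* S_1 maps [0,1] below t1 + c <= t2 and S_2 maps it above t2. *)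
Lemma dist_simil_sep x y : 0 <= x <= 1 -> 0 <= y <= 1 ->
  `|simil c t1 x - simil c t2 y| = c * y - c * x + (t2 - t1).
Proof.
move=> /andP[x0 x1] /andP[y0 y1].
have cx : c * x <= c by rewrite ler_piMr // ltW.
have cy : 0 <= c * y by rewrite mulr_ge0 // ltW.
by rewrite /simil ler0_norm; [lra|move: t1_sep; lra].
Qed.

Lemma dist_measurable : measurable_fun setT (fun z : R * R => `|z.1 - z.2|).
Proof.
apply: measurableT_comp; first exact: normr_measurable.
by apply: measurable_funB; [exact: measurable_fst|exact: measurable_snd].
Qed.

Lemma dist_unit z : K z -> 0 <= `|z.1 - z.2| <= 1.
Proof.
by case/attractor_unit=> *; rewrite normr_ge0 /= ler_norml; apply/andP; split; lra.
Qed.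

Lemma Rintegral_dist_diag a :
  \int[gamma]_(z in K) `|simil c a z.1 - simil c a z.2| = c * dist_mean.
Proof.
rewrite -RintegralZl //; last first.
  apply: (attractor_integrable _ 1 dist_measurable) => z /dist_unit/andP[? ?].
  by rewrite normr_id.
by apply: eq_Rintegral => z _; rewrite dist_simil.
Qed.

Lemma Rintegral_dist_offdiag :
  \int[gamma]_(z in K) `|simil c t1 z.1 - simil c t2 z.2|
    = (- c) * mean1 + c * mean2 + (t2 - t1)
  /\ \int[gamma]_(z in K) `|simil c t2 z.1 - simil c t1 z.2|
    = c * mean1 + (- c) * mean2 + (t2 - t1).
Proof.
split; rewrite -[RHS]Rintegral_affine.
all: apply: eq_Rintegral => z /set_mem /attractor_unit[? ? ? ?].
  by rewrite dist_simil_sep ?mulNr; [lra|apply/andP..].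
by rewrite distrC dist_simil_sep ?mulNr; [lra|apply/andP..].
Qed.

Lemma dist_mean_eq : dist_mean * (1 - c + c * (p + q - 2 * r)) =
  (t2 - t1) * (p + q - 2 * r) + c * (q - p) * (mean1 - mean2).
Proof.
have := Rintegral_cells _ 1 dist_measurable dist_unit.
rewrite !big_ord_recr big_ord0 /= add0r /cell_weight /cell /simil2 /=.
have [-> ->] := Rintegral_dist_offdiag.
rewrite !Rintegral_dist_diag; lra.
Qed.

Lemma dist_meanE : dist_mean =
  (t2 - t1) / (1 - c) *
  ((c * (p - q) ^+ 2 + (1 - c) * (p + q - 2 * r)) / ((1 - c) + c * (p + q - 2 * r))).
Proof.
have c1_neq0 : 1 - c != 0 by rewrite subr_eq0 eq_sym lt_eqF.
have den_gt0 : 0 < 1 - c + c * (p + q - 2 * r).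
  move: r_gt r_lt; rewrite gt_max lt_min => /andP[r0 _] /andP[rp rq].
  have : 0 < c * (p + q - 2 * r) by rewrite mulr_gt0 //; lra.
  by move: c_lt1; lra.
have mean12 : mean1 - mean2 = (q - p) * (t2 - t1) / (1 - c).
  by apply: (mulfI c1_neq0); rewrite mulrBr mean1E mean2E; field.
apply: (mulIf (lt0r_neq0 den_gt0)); rewrite dist_mean_eq mean12.
by field; rewrite c1_neq0 lt0r_neq0.
Qed.

Lemma integral_dist : (\int[gamma]_(z in K) (`|z.1 - z.2|)%:E)%E =
  ((t2 - t1) / (1 - c) *
   ((c * (p - q) ^+ 2 + (1 - c) * (p + q - 2 * r)) / ((1 - c) + c * (p + q - 2 * r))))%:E.
Proof.
rewrite -dist_meanE EFin_Rintegral //.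
apply: (attractor_integrable _ 1 dist_measurable) => z /dist_unit/andP[? ?].
by rewrite normr_id.
Qed.

End coupling_on_attractor.

Theorem theorem2p1 (R : realType) (c t1 t2 p q r : R) (F : set R)
  (gamma : probability (R * R)%type R) :
  0 < c -> c <= 1 / 2 ->
  0 <= t1 -> t1 <= 1 - 2 * c ->
  t1 + c <= t2 -> t2 <= 1 - c ->
  0 < p -> p < 1 -> 0 < q -> q < 1 -> p != q ->
  compact F -> F !=set0 ->
  F = simil c t1 @` F `|` simil c t2 @` F ->
  Num.max 0 (p + q - 1) < r -> r < Num.min p q ->
  coupling_selfsim gamma c t1 t2 p q r ->
  (\int[gamma]_(z in F `*` F) (`|z.1 - z.2|)%:E)%E =
    ((t2 - t1) / (1 - c) *
     ((c * (p - q) ^+ 2 + (1 - c) * (p + q - 2 * r))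
      / ((1 - c) + c * (p + q - 2 * r))))%:E.
Proof.
(* The bounds on p and q follow from those on r. *)
move=> c_gt0 c_le t1_ge0 _ t1_sep t2_le _ _ _ _ _ F_compact F_neq0 F_selfsim r_gt r_lt.
exact: integral_dist.
Qed.
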